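(* Let $I\subset\mathbb{R}$ be an interval, $n\in\mathbb{N}$ and let $f:I\to\mathbb{R}$ be $n$-convex. Fix $k\in\mathbb{N}$ with $k\le n$ and points $x_1<\dots<x_k$ in $I$. Assign to each $x_j$ a multiplicity $l_j\in\mathbb{N}$ ($j=1,\dots,k$) such that $l_1+\dots+l_k=n+1$, and such that $l_1=1$ if $x_1=\inf I$, and $l_k=1$ if $x_k=\sup I$. Let $I_0=(-\infty,x_1)$, $I_j=(x_j,x_{j+1})$ for $j=1,\dots,k-1$, and $I_k=(x_k,\infty)$. Then there exists a polynomial $p\in\Pi_n$ such that $p(x_j)=f(x_j)$ for $j=1,\dots,k$ and $(-1)^{n+1}\bigl(f(x)-p(x)\bigr)\ge 0$ for $x\in I_0\cap I$; $(-1)^{n+1-(l_1+\dots+l_j)}\bigl(f(x)-p(x)\bigr)\ge 0$ for $x\in I_j$, $j=1,\dots,k-1$; $f(x)-p(x)\ge 0$ for $x\in I_k\cap I$.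
   Context: $\Pi_n$ denotes the set of real polynomials of degree at most $n$. Divided differences are defined recursively by $[x_1;f]:=f(x_1)$ and $[x_1,\dots,x_{m+1};f]:=\frac{[x_2,\dots,x_{m+1};f]-[x_1,\dots,x_m;f]}{x_{m+1}-x_1}$ for pairwise distinct points. For $n\in\mathbb{N}$, a function $f:I\to\mathbb{R}$ is called $n$-convex if $[x_1,\dots,x_{n+2};f]\ge 0$ for all pairwise distinct $x_1,\dots,x_{n+2}\in I$. *)

From HB Require Import structures.
From mathcomp Require Import all_boot all_order all_algebra.
From mathcomp Require Import classical_sets reals.
Set Implicit Arguments. Unset Strict Implicit. Unset Printing Implicit Defensive.
Import Order.TTheory GRing.Theory Num.Theory.
Local Open Scope ring_scope.

Definition is_interval (R : realType) (E : set R) :=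
  forall x y, E x -> E y -> forall z, x <= z <= y -> E z.

Fixpoint divdiff (R : realType) (f : R -> R) (m : nat) (s : seq R) : R :=
  match m with
  | 0%N => f (head 0 s)
  | m'.+1 => (divdiff f m' (behead s) - divdiff f m' (take m'.+1 s))
             / (nth 0 s m'.+1 - head 0 s)
  end.

Definition dd (R : realType) (f : R -> R) (s : seq R) : R :=
  divdiff f (size s).-1 s.

Definition n_convex (R : realType) (I : set R) (n : nat) (f : R -> R) :=
  forall s : seq R, size s = n.+2 -> uniq s -> (forall y, y \in s -> I y) ->
    0 <= dd f s.

From Pilot Require Import Defs.
From HB Require Import structures.
From mathcomp Require Import all_boot all_order all_algebra.
From mathcomp Require Import classical_sets functions reals boolp topology normedtype realfun.
From mathcomp Require Import ring lra zify.
Import Order.TTheory GRing.Theory Num.Theory numFieldNormedType.Exports.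
Set Implicit Arguments. Unset Strict Implicit. Unset Printing Implicit Defensive.
Local Open Scope classical_set_scope.
Local Open Scope ring_scope.

(* Let y_1, ..., y_(n+1) be the points x_j repeated l_j times and w(y) the
   product of the (y - y_i).  It suffices to find p in Pi_n with p = f at the
   nodes and w (f - p) >= 0 on I, since w has the prescribed sign on each I_j.

   Such a p is built by induction on n, removing one node a.  For any c, the
   divided differences of g = [a, .; f] (with g a = c) at points other than a
   are those of f at the same points and a, so g is (n-1)-convex off a, and if
   q solves the problem for g and the other nodes then f a + (y - a) q(y)
   solves it for f.  A node at an end of I is simple and can be removed from
   the domain.  An interior node a must stay in it: there t |-> [t, a, B; f]
   is nondecreasing and bounded below right of a, so g has a right limit at a,
   and taking c equal to it keeps g (n-1)-convex on I by right continuity of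
   divided differences. *)

Lemma perm_cons2 (T : eqType) (a b : T) u : perm_eq [:: a, b & u] [:: b, a & u].
Proof. by rewrite -[[:: a, b & u]]/([:: a] ++ [:: b] ++ u) perm_catCA. Qed.

Lemma uniq_cons2 (T : eqType) (a b : T) u :
  uniq [:: a, b & u] -> uniq (a :: u) && uniq (b :: u).
Proof. by rewrite /= inE negb_or => /and3P[/andP[_ ->] -> ->]. Qed.

Section LagrangeForm.
Variable R : realType.
Implicit Types (f : R -> R) (a b t : R) (s u Y : seq R).

(* Lagrange form of the divided difference, visibly symmetric in the nodes. *)
Definition ddL f s := \sum_(x <- s) f x / \prod_(y <- s | y != x) (x - y).

Definition ddL_tail f Y t :=
  \sum_(y <- Y) f y / ((y - t) * \prod_(z <- Y | z != y) (y - z)).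

Lemma ddL_perm f s1 s2 : perm_eq s1 s2 -> ddL f s1 = ddL f s2.
Proof.
by move=> P; rewrite /ddL (perm_big _ P); apply: eq_bigr => x _; rewrite (perm_big _ P).
Qed.

Lemma prod_neq_notin u a (F : R -> R) : a \notin u ->
  \prod_(y <- u | y != a) F y = \prod_(y <- u) F y.
Proof.
move=> au; rewrite big_seq_cond [RHS]big_seq; apply: eq_bigl => y.
by case: (boolP (y \in u)) => //= yu; apply: contraNneq au => <-.
Qed.

Lemma prod_subr_neq0 u a : \prod_(y <- u | y != a) (a - y) != 0.
Proof.
by rewrite prodf_seq_neq0; apply/allP => y _; apply/implyP; rewrite subr_eq0 eq_sym.
Qed.

Lemma prod_subr_notin_neq0 u a : a \notin u -> \prod_(y <- u) (a - y) != 0.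
Proof. by move=> au; rewrite -(prod_neq_notin _ au) prod_subr_neq0. Qed.

Lemma ddL_seq1 f a : ddL f [:: a] = f a.
Proof. by rewrite /ddL big_seq1 big_cons eqxx big_nil divr1. Qed.

Lemma ddL_cons f t Y : uniq (t :: Y) ->
  ddL f (t :: Y) = f t / \prod_(y <- Y) (t - y) + ddL_tail f Y t.
Proof.
case/andP=> tY _; rewrite /ddL big_cons big_cons eqxx /= prod_neq_notin //.
congr (_ + _); rewrite big_seq [RHS]big_seq; apply: eq_bigr => y yY.
by rewrite big_cons (_ : t != y) //; apply: contraNneq tY => ->.
Qed.

Lemma ddL_cons2 f a b u : uniq [:: a, b & u] ->
  ddL f [:: a, b & u] = (ddL f (a :: u) - ddL f (b :: u)) / (a - b).
Proof.
move=> abu; have /and3P[] := abu; rewrite inE negb_or => /andP[ab au] bu uu.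
rewrite !ddL_cons //= ?au ?bu // /ddL_tail !big_cons eqxx /= prod_neq_notin //.
have Pa := prod_subr_notin_neq0 au; have Pb := prod_subr_notin_neq0 bu.
have ab0 : a - b != 0 by rewrite subr_eq0.
have ba0 : b - a != 0 by rewrite subr_eq0 eq_sym.
suff -> : \sum_(y <- u) f y / ((y - a) * \prod_(z <- b :: u | z != y) (y - z)) =
  (\sum_(y <- u) f y / ((y - a) * \prod_(z <- u | z != y) (y - z)) -
   \sum_(y <- u) f y / ((y - b) * \prod_(z <- u | z != y) (y - z))) / (a - b).
  by field; rewrite Pa Pb ab0 ba0.
rewrite -sumrB mulr_suml big_seq [RHS]big_seq; apply: eq_bigr => y yu.
rewrite big_cons (_ : b != y) /=; last by apply: contraNneq bu => ->.
have ya : y - a != 0 by rewrite subr_eq0; apply: contraNneq au => <-.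
have yb : y - b != 0 by rewrite subr_eq0; apply: contraNneq bu => <-.
by have := prod_subr_neq0 u y => P; field; apply/and4P.
Qed.

Lemma divdiff_ddL f m s : size s = m.+1 -> uniq s -> divdiff f m s = ddL f s.
Proof.
elim: m s => [|m IH] [|x s] //=.
  by case: s => // _ _; rewrite ddL_seq1.
case=> sm /andP[xs us]; case/lastP: s sm xs us => [|r y] //.
rewrite size_rcons => -[rm] xs us.
rewrite -cats1 take_size_cat // cats1 nth_rcons rm ltnn eqxx.
rewrite IH ?size_rcons ?rm // IH /= ?rm //; last first.
  by move: xs us; rewrite rcons_uniq mem_rcons inE negb_or => /andP[_ ->] /andP[].
have P : perm_eq (x :: rcons r y) [:: y, x & r].
  by rewrite perm_sym -[[:: y, x & r]]/([:: y] ++ [:: x] ++ r) perm_catCA /=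
    perm_cons perm_sym perm_rcons.
rewrite (ddL_perm f (permEl (perm_rcons y r))) (ddL_perm f P) ddL_cons2 //.
by rewrite -(perm_uniq P) /= xs.
Qed.

Lemma dd_ddL f s : s != [::] -> uniq s -> dd f s = ddL f s.
Proof. by case: s => // x s _; exact: divdiff_ddL. Qed.

Lemma ddL_cst k a b u : uniq [:: a, b & u] -> ddL (fun=> k) [:: a, b & u] = 0.
Proof.
elim: u a b => [|c u IH] a b abu; rewrite ddL_cons2 //.
  by rewrite !ddL_seq1 subrr mul0r.
by case/andP: (uniq_cons2 abu) => acu bcu; rewrite !IH // subrr mul0r.
Qed.

End LagrangeForm.

Section Slope.
Variable R : realType.
Implicit Types (I J : set R) (f : R -> R) (a c y z : R) (s zs Y : seq R).

Definition slope f a c y := if y == a then c else (f y - f a) / (y - a).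

Lemma ddL_slope f a c Y : uniq (a :: Y) -> Y != [::] ->
  ddL (slope f a c) Y = ddL f (a :: Y).
Proof.
case: Y => // b Y abY _; have /andP[aY _] := abY.
have Pa := prod_subr_notin_neq0 aY.
have /eqP := ddL_cst 1 abY; rewrite ddL_cons // addrC addr_eq0 => /eqP tail1.
rewrite [RHS]ddL_cons //; set Y' := b :: Y in aY Pa tail1 *.
transitivity (ddL_tail f Y' a - f a * ddL_tail (fun=> 1) Y' a); last first.
  by rewrite tail1; field.
rewrite /ddL /ddL_tail mulr_sumr -sumrB big_seq [RHS]big_seq; apply: eq_bigr => y yY.
have ya : y != a by apply: contraNneq aY => <-.
have P := prod_subr_neq0 Y' y.
rewrite /slope (negPf ya); rewrite -subr_eq0 in ya.
by field; rewrite ya P.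
Qed.

Lemma ddL_slope_ge0 I n f a c s : n_convex I n f -> I a ->
  size s = n.+1 -> uniq s -> a \notin s -> (forall y, y \in s -> I y) ->
  0 <= ddL (slope f a c) s.
Proof.
move=> hf Ia ss us nas sI; have s0 : s != [::] by case: s ss {us nas sI}.
have uas : uniq (a :: s) by rewrite /= nas us.
rewrite ddL_slope // -dd_ddL //; apply: hf => //=; first by rewrite ss.
by move=> y; rewrite inE => /predU1P[->|/sI].
Qed.

Lemma setD1_neq I a z : I z -> z != a -> (I `\ a) z.
Proof. by move=> Iz za; split=> // /eqP; apply/negP. Qed.

Definition twosided I z := (exists2 y, I y & y < z) /\ (exists2 y, I y & z < y).

Lemma is_interval_setD1 I a : is_interval I -> ~ twosided I a -> is_interval (I `\ a).
Proof.
move=> hI Na y y' [Iy /eqP ya] [Iy' /eqP y'a] z yzy'.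
split; first exact: (hI y y').
move=> za; move: yzy'; rewrite za => /andP[yz zy']; apply: Na; split.
  by exists y => //; rewrite lt_neqAle ya.
by exists y' => //; rewrite lt_neqAle eq_sym y'a.
Qed.

Lemma twosided_setD1 I a z : is_interval I -> twosided I z -> z != a ->
  twosided (I `\ a) z.
Proof.
move=> hI [[y Iy yz] [y' Iy' zy']] za.
have Iz : I z by apply: (hI y y'); rewrite ?ltW.
split.
  have [ya|ya] := eqVneq y a; last by exists y => //; exact: setD1_neq.
  exists ((y + z) / 2); last lra.
  apply: setD1_neq; first by apply: (hI y z) => //; apply/andP; split; lra.
  by rewrite -ya gt_eqF //; lra.
have [ya|ya] := eqVneq y' a; last by exists y' => //; exact: setD1_neq.
exists ((z + y') / 2); last lra.
apply: setD1_neq; first by apply: (hI z y') => //; apply/andP; split; lra.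
by rewrite -ya lt_eqF //; lra.
Qed.

Lemma n_convex_slope_setD1 I n f a c : n_convex I n.+1 f -> I a ->
  n_convex (I `\ a) n (slope f a c).
Proof.
move=> hf Ia s ss us sJ; rewrite dd_ddL //; last by case: s ss {us sJ}.
apply: (ddL_slope_ge0 c hf) => // [|y /sJ[]//].
by apply/negP => /sJ[_ /(_ erefl)].
Qed.

Definition sign_interpolant I f zs (p : {poly R}) :=
  {in zs, forall z, p.[z] = f z} /\
  (forall y, I y -> 0 <= \prod_(z <- zs) (y - z) * (f y - p.[y])).

Lemma size_linear_lift (b a : R) (q : {poly R}) m :
  (size q <= m)%N -> (size (b%:P + ('X - a%:P) * q)%R <= m.+1)%N.
Proof.
move=> sq; apply: (leq_trans (size_add _ _)); rewrite geq_max.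
rewrite (leq_trans (size_polyC_leq1 _)) //=.
by apply: (leq_trans (size_mul_leq _ _)); rewrite size_XsubC.
Qed.

Lemma sign_interpolant_lift I J f zs a c q : a \in zs ->
  (forall y, I y -> y != a -> J y) ->
  sign_interpolant J (slope f a c) (rem a zs) q ->
  sign_interpolant I f zs ((f a)%:P + ('X - a%:P) * q).
Proof.
move=> azs IJ [qz qsign]; split=> [z zzs | y Iy]; rewrite !hornerE.
  have [->|za] := eqVneq z a; first by rewrite subrr mul0r addr0.
  rewrite qz ?rem_mem // /slope (negPf za).
  by rewrite -subr_eq0 in za; field.
rewrite (perm_big _ (perm_to_rem azs)) big_cons /=.
have [->|ya] := eqVneq y a; first by rewrite subrr !mul0r.
have := qsign y (IJ y Iy ya); rewrite /slope (negPf ya); rewrite -subr_eq0 in ya.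
rewrite (_ : f y - (f a + _) = (y - a) * ((f y - f a) / (y - a) - q.[y])); last by field.
by rewrite mulrACA -expr2 => ?; apply: mulr_ge0 => //; exact: sqr_ge0.
Qed.

End Slope.

Section RightLimits.
Variable R : realType.
Implicit Types (I : set R) (f h : R -> R) (a l t u v : R) (B C Y : seq R).

Lemma near_notin a Y : a \notin Y -> \forall t \near a, t \notin Y.
Proof.
elim: Y => [|y Y IH]; first by move=> _; near=> t.
rewrite inE negb_or => /andP[ay /IH aY].
have ty : \forall t \near a, t != y.
  by apply: open_nbhs_nbhs; split; [exact: open_neq | exact: ay].
by near=> t; rewrite inE negb_or; apply/andP; split; near: t.
Unshelve. all: by end_near.
Qed.

Lemma cvg_prod_subr Y a : \prod_(y <- Y) (t - y) @[t --> a] --> \prod_(y <- Y) (a - y).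
Proof.
apply: cvg_big => [|y _]; first exact: mul_continuous.
by apply: cvgB; [exact: cvg_id | exact: cvg_cst].
Qed.

Lemma cvg_ddL_tail h Y a : a \notin Y -> ddL_tail h Y t @[t --> a] --> ddL_tail h Y a.
Proof.
move=> aY; rewrite /ddL_tail big_seq; under eq_cvg do rewrite big_seq.
apply: cvg_big => [|y yY]; first exact: add_continuous.
apply: cvgM; first exact: cvg_cst.
apply: cvgV; first by rewrite mulf_neq0 ?prod_subr_neq0 // subr_eq0; apply: contraNneq aY => <-.
by apply: cvgM; [apply: cvgB; [exact: cvg_cst | exact: cvg_id] | exact: cvg_cst].
Qed.

Lemma cvg_right_ddL_cons h a Y : uniq (a :: Y) -> h t @[t --> a^'+] --> h a ->
  ddL h (t :: Y) @[t --> a^'+] --> ddL h (a :: Y).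
Proof.
move=> aY ha; have /andP[naY uY] := aY; rewrite ddL_cons //.
apply: cvg_trans _ (cvgD (cvgM ha (cvgV (prod_subr_notin_neq0 naY)
  (cvg_at_right_filter (@cvg_prod_subr Y a)))) (cvg_at_right_filter (@cvg_ddL_tail h _ _ naY))).
apply: near_eq_cvg; near=> t.
have tY : t \notin Y by near: t; apply: cvg_within; exact: near_notin.
by rewrite ddL_cons //= tY.
Unshelve. all: by end_near.
Qed.

Lemma cvg_right_of_ddL_cons h a Y l : uniq (a :: Y) -> ddL h (t :: Y) @[t --> a^'+] --> l ->
  h t @[t --> a^'+] --> (l - ddL_tail h Y a) * \prod_(y <- Y) (a - y).
Proof.
move=> /andP[naY uY] hl.
apply: cvg_trans _ (cvgM (cvgB hl (cvg_at_right_filter (@cvg_ddL_tail h _ _ naY)))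
  (cvg_at_right_filter (@cvg_prod_subr Y a))).
apply: near_eq_cvg; near=> t.
have tY : t \notin Y by near: t; apply: cvg_within; exact: near_notin.
have := prod_subr_notin_neq0 tY; rewrite !fctE /= ddL_cons /= ?tY // => P.
by field.
Unshelve. all: by end_near.
Qed.

Lemma le_ddL_cons I m f x y C : n_convex I m f -> size C = m ->
  uniq [:: x, y & C] -> (forall z, z \in [:: x, y & C] -> I z) -> x < y ->
  ddL f (x :: C) <= ddL f (y :: C).
Proof.
move=> hf sC xyC CI xy; have P := perm_cons2 x y C.
have yxC : uniq [:: y, x & C] by rewrite -(perm_uniq P).
have := hf [:: y, x & C]; rewrite /= sC => /(_ erefl yxC).
rewrite dd_ddL // ddL_cons2 // pmulr_lge0 ?invr_gt0 ?subr_gt0 // subr_ge0; apply.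
by move=> z; rewrite -(perm_mem P); exact: CI.
Qed.

Lemma exists_uniq_seq_in m (lo hi : R) : lo < hi ->
  exists s : seq R, [/\ size s = m, uniq s & forall b, b \in s -> lo < b < hi].
Proof.
elim: m lo => [|m IH] lo lohi; first by exists [::].
have [|s [ss us hs]] := IH ((lo + hi) / 2); first lra.
exists ((lo + hi) / 2 :: s); split => /=; first by rewrite ss.
  by rewrite us andbT; apply/negP => /hs; rewrite ltxx.
by move=> b; rewrite inE => /predU1P[->|/hs/andP[? ?]]; apply/andP; split; lra.
Qed.

Lemma ex_cvg_right_ddL_cons I m f a u w C : n_convex I m f -> size C = m ->
  u < a -> a < w -> I u -> u \notin C -> uniq C -> (forall z, z \in C -> I z) ->
  (forall t, a < t -> t < w -> I t /\ t \notin C) ->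
  exists l, ddL f (t :: C) @[t --> a^'+] --> l.
Proof.
move=> hf sC ua aw Iu uC uniqC CI tIC.
have ddL_le x y : I x -> x \notin C -> a < y -> y < w -> x < y ->
    ddL f (x :: C) <= ddL f (y :: C).
  move=> Ix xC ay yw xy; have [Iy yC] := tIC y ay yw.
  apply: (le_ddL_cons hf sC) => //=; first by rewrite inE negb_or lt_eqF // xC yC uniqC.
  by move=> z; rewrite !inE => /or3P[/eqP->|/eqP->|/CI].
have phi_mono : {in `]a, w[ &, {homo (fun t => ddL f (t :: C)) : x y / x <= y}}.
  move=> t t'; rewrite !in_itv /= => /andP[ta tw] /andP[ta' t'w].
  rewrite le_eqVlt => /predU1P[->//|tt']; have [It tC] := tIC t ta tw.
  exact: ddL_le.
have phi_lb : has_lbound ((fun t => ddL f (t :: C)) @` [set` `]a, w[]).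
  exists (ddL f (u :: C)) => _ [t + <-]; rewrite /= in_itv /= => /andP[ta tw].
  exact: ddL_le (lt_trans ua ta).
by eexists; apply: nondecreasing_at_right_cvgr phi_mono phi_lb; rewrite bnd_simp.
Qed.

Lemma slope_cvg_right I n f a u v : is_interval I -> n_convex I n.+1 f ->
  I u -> I v -> u < a -> a < v -> exists c : R, (f t - f a) / (t - a) @[t --> a^'+] --> c.
Proof.
move=> hI hf Iu Iv ua av.
have [w aw wv] : exists2 w, a < w & w < v by exists ((a + v) / 2); lra.
have [B [sB uB Bwv]] := exists_uniq_seq_in n wv.
have Ia : I a by apply: (hI u v) => //; rewrite !ltW.
have tB t : t < w -> t \notin B by move=> tw; apply/negP => /Bwv/andP[? _]; lra.
have aB : a \notin B by apply: tB.
have uaB : uniq (a :: B) by rewrite /= aB.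
have [l phil] : exists l, ddL f [:: t, a & B] @[t --> a^'+] --> l.
  have saB : size (a :: B) = n.+1 by rewrite /= sB.
  have uaB' : u \notin a :: B by rewrite inE negb_or lt_eqF // (tB _ (lt_trans ua aw)).
  apply: (ex_cvg_right_ddL_cons hf saB ua aw Iu uaB' uaB).
    move=> z; rewrite inE => /predU1P[->|/Bwv/andP[? ?]] //.
    by apply: (hI a v) => //; apply/andP; split; lra.
  move=> t ta tw; rewrite inE negb_or gt_eqF // tB //; split=> //.
  by apply: (hI a v) => //; apply/andP; split; lra.
have /(cvg_right_of_ddL_cons uaB) slope_cvg : ddL (slope f a 0) (t :: B) @[t --> a^'+] --> l.
  apply: cvg_trans _ phil; apply: near_eq_cvg; near=> t.
  have ta : a < t by near: t; exact: nbhs_right_gt.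
  have tw : t < w by near: t; exact: nbhs_right_lt.
  rewrite ddL_slope /= ?inE ?negb_or ?lt_eqF ?aB ?tB ?uB //.
  exact: ddL_perm (perm_cons2 t a B).
eexists; apply: cvg_trans _ slope_cvg; apply: near_eq_cvg; near=> t.
by rewrite /slope gt_eqF //; near: t; exact: nbhs_right_gt.
Unshelve. all: by end_near.
Qed.

Lemma n_convex_slope_interior I n f a u v : is_interval I -> n_convex I n.+1 f ->
  I u -> I v -> u < a -> a < v -> exists c, n_convex I n (slope f a c).
Proof.
move=> hI hf Iu Iv ua av; have [c fc] := slope_cvg_right hI hf Iu Iv ua av.
have Ia : I a by apply: (hI u v) => //; rewrite !ltW.
have slope_cont : slope f a c t @[t --> a^'+] --> slope f a c a.
  rewrite {2}/slope eqxx; apply: cvg_trans _ fc; apply: near_eq_cvg; near=> t.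
  by rewrite /slope gt_eqF //; near: t; exact: nbhs_right_gt.
exists c => s ss us sI; rewrite dd_ddL //; last by case: s ss {us sI}.
have [as_|nas] := boolP (a \in s); last exact: (ddL_slope_ge0 c hf).
have P := perm_to_rem as_; set Y := rem a s in P.
have uaY : uniq (a :: Y) by rewrite -(perm_uniq P).
have /andP[aY uY] := uaY.
have YI y : y \in Y -> I y by move=> yY; apply: sI; rewrite (perm_mem P) inE yY orbT.
rewrite (ddL_perm _ P); apply: cvgr_to_ge (cvg_right_ddL_cons uaY slope_cont) _.
near=> t; have ta : a < t by near: t; exact: nbhs_right_gt.
have tv : t < v by near: t; exact: nbhs_right_lt.
have tY : t \notin Y by near: t; apply: cvg_within; exact: near_notin.
apply: (ddL_slope_ge0 c hf) => //=.
- by rewrite -ss (perm_size P).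
- by rewrite tY.
- by rewrite inE negb_or lt_eqF.
- by move=> y; rewrite inE => /predU1P[->|/YI //]; apply: (hI a v) => //; rewrite !ltW.
Unshelve. all: by end_near.
Qed.

End RightLimits.

Section SignInterpolant.
Variable R : realType.
Implicit Types (I : set R) (f : R -> R) (zs : seq R).

Lemma exists_sign_interpolant n I f zs : is_interval I -> n_convex I n f ->
  size zs = n.+1 -> (forall z, z \in zs -> I z) ->
  (forall z, z \in zs -> (1 < count_mem z zs)%N -> twosided I z) ->
  exists2 p : {poly R}, (size p <= n.+1)%N & sign_interpolant I f zs p.
Proof.
elim: n I f zs => [|n IH] I f zs hI hf szs zsI zs2.
  case: zs szs zsI {zs2} => [|z []] // _ zsI; have Iz := zsI z (mem_head _ _).
  exists ((f z)%:P + ('X - z%:P) * 0); first by apply: size_linear_lift; rewrite size_poly0.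
  apply: (sign_interpolant_lift (J := I `\ z) (c := 0) (mem_head _ _)).
    by move=> y Iy; exact: setD1_neq.
  rewrite /= eqxx; split=> // y [Iy yz]; rewrite big_nil mul1r hornerE subr0.
  rewrite -(ddL_seq1 (slope f z 0)); apply: (ddL_slope_ge0 0 hf) => //=.
    by rewrite inE eq_sym; apply/eqP.
  by move=> t; rewrite inE => /eqP ->.
have sY a : a \in zs -> size (rem a zs) = n.+1 by move=> azs; rewrite size_rem // szs.
have YI a z : z \in rem a zs -> I z by move/mem_rem; exact: zsI.
have [[a azs Na]|interior] := pselect (exists2 a, a \in zs & ~ twosided I a).
  have arem : a \notin rem a zs.
    apply/count_memPn/eqP; rewrite count_mem_rem eqxx subn_eq0 leqNgt.
    by apply/negP => /(zs2 a azs).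
  have Yna z : z \in rem a zs -> z != a by move=> zr; apply: contraTneq zr => ->.
  have Y2 z : z \in rem a zs -> (1 < count_mem z (rem a zs))%N -> twosided (I `\ a) z.
    move=> zr; rewrite count_mem_rem => /leq_trans/(_ (leq_subr _ _)) z2.
    exact: twosided_setD1 (zs2 z (mem_rem zr) z2) (Yna z zr).
  have [q sq qint] := IH (I `\ a) (slope f a 0) (rem a zs) (is_interval_setD1 hI Na)
    (n_convex_slope_setD1 0 hf (zsI a azs)) (sY a azs)
    (fun z zr => setD1_neq (YI a z zr) (Yna z zr)) Y2.
  exists ((f a)%:P + ('X - a%:P) * q); first exact: size_linear_lift.
  by apply: sign_interpolant_lift qint => // y Iy ya; exact: setD1_neq.
have two z : z \in zs -> twosided I z.
  by move=> zzs; apply: contrapT => Nz; apply: interior; exists z.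
have [a azs] : exists a, a \in zs by exists (head 0 zs); rewrite -nth0 mem_nth // szs.
have [[u Iu ua] [v Iv av]] := two a azs.
have [c hc] := n_convex_slope_interior hI hf Iu Iv ua av.
have [q sq qint] := IH I (slope f a c) (rem a zs) hI hc (sY a azs) (YI a)
  (fun z zr _ => two z (mem_rem zr)).
exists ((f a)%:P + ('X - a%:P) * q); first exact: size_linear_lift.
exact: sign_interpolant_lift qint.
Qed.

End SignInterpolant.

Section Nodes.
Variable R : realType.
Variables (x : nat -> R) (l : nat -> nat) (k : nat).

Definition nodes := flatten [seq nseq (l i) (x i) | i <- index_iota 1 k.+1].

Lemma size_nodes : size nodes = (\sum_(1 <= i < k.+1) l i)%N.
Proof.
rewrite size_flatten /shape -map_comp sumnE big_map.
by apply: eq_bigr => i _; rewrite /= size_nseq.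
Qed.

Lemma mem_nodes z : z \in nodes -> exists2 i, (1 <= i <= k)%N & z = x i.
Proof. by case/flatten_mapP => i; rewrite mem_index_iota => ik /nseqP[-> _]; exists i. Qed.

Lemma prod_nodes y : \prod_(z <- nodes) (y - z) = \prod_(1 <= i < k.+1) (y - x i) ^+ l i.
Proof.
rewrite big_flatten big_map; apply: eq_bigr => i _; rewrite big_nseq.
by elim: (l i) => //= m ->; rewrite exprS.
Qed.

Hypothesis x_incr : forall j, (1 <= j < k)%N -> x j < x j.+1.

Lemma lt_points i j : (1 <= i)%N -> (i < j)%N -> (j <= k)%N -> x i < x j.
Proof.
move=> i1 ij jk; apply: (@homo_ltn_in R [pred i | (1 <= i <= k)%N] x <%R lt_trans) => //=.
- by move=> a b /andP[a1 ak] /andP[b1 bk] c /andP[ac cb]; apply/andP; split; lia.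
- by move=> a /andP[a1 _] /andP[_ ak]; apply: x_incr; rewrite a1.
- by apply/andP; split; lia.
- by apply/andP; split; lia.
Qed.

Lemma count_nodes j : (1 <= j <= k)%N -> count_mem (x j) nodes = l j.
Proof.
move=> jk; rewrite count_flatten sumnE !big_map.
rewrite (bigD1_seq j) ?mem_index_iota ?iota_uniq //= count_nseq /= eqxx mul1n.
rewrite big1_seq ?addn0 // => i /andP[ij]; rewrite mem_index_iota => ik.
rewrite count_nseq /=; case/andP: ik => i1 ik; case/andP: jk => j1 jk.
have [lt_ij|lt_ji|eq_ij] := ltngtP i j.
- by rewrite lt_eqF ?mul0n // lt_points.
- by rewrite gt_eqF ?mul0n // lt_points.
- by rewrite eq_ij eqxx in ij.
Qed.

Lemma twosided_point (I : set R) j : (forall i, (1 <= i <= k)%N -> I (x i)) ->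
  ((forall y, I y -> x 1 <= y) -> l 1 = 1%N) -> ((forall y, I y -> y <= x k) -> l k = 1%N) ->
  (1 <= j <= k)%N -> (1 < l j)%N -> twosided I (x j).
Proof.
move=> xI hl1 hlk /andP[j1 jk] lj; split.
  have [j1'|j1'] := eqVneq j 1%N.
    subst j; apply: contrapT => below; move: lj; rewrite hl1 // => y Iy.
    by rewrite leNgt; apply/negP => yx; apply: below; exists y.
  by exists (x j.-1); [apply: xI; lia | apply: lt_points; lia].
have [jk'|jk'] := eqVneq j k.
  subst j; apply: contrapT => above; move: lj; rewrite hlk // => y Iy.
  by rewrite leNgt; apply/negP => yx; apply: above; exists y.
by exists (x j.+1); [apply: xI; lia | apply: lt_points; lia].
Qed.

Lemma le_points i j : (1 <= i)%N -> (i <= j)%N -> (j <= k)%N -> x i <= x j.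
Proof.
by move=> i1; rewrite leq_eqVlt => /predU1P[->//|ij jk]; rewrite ltW // lt_points.
Qed.

Lemma prod_nodes_sign J y e : (J <= k)%N ->
  ((0 < J)%N -> x J < y) -> ((J < k)%N -> y < x J.+1) ->
  0 <= \prod_(z <- nodes) (y - z) * e ->
  0 <= (-1) ^+ (\sum_(J.+1 <= i < k.+1) l i)%N * e.
Proof.
move=> Jk xJy yxJ; rewrite prod_nodes (big_cat_nat (n := J.+1)) //=.
under [\prod_(J.+1 <= i < k.+1) _]eq_big_nat => i _ do rewrite -[y - x i]opprB exprNn.
rewrite big_split /= prodrXr.
set A := \prod_(1 <= i < J.+1) _; set B := \prod_(J.+1 <= i < k.+1) _; set P := (-1) ^+ _.
have A0 : 0 < A.
  rewrite /A big_nat_cond; apply: prodr_gt0 => i /andP[/andP[i1 iJ] _].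
  have xiJ : x i <= x J by apply: le_points; lia.
  by rewrite exprn_gt0 // subr_gt0 (le_lt_trans xiJ) // xJy // (leq_trans i1 iJ).
have B0 : 0 < B.
  rewrite /B big_nat_cond; apply: prodr_gt0 => i /andP[/andP[Ji ik] _].
  have xJi : x J.+1 <= x i by apply: le_points; lia.
  by rewrite exprn_gt0 // subr_gt0 (lt_le_trans _ xJi) // yxJ //; lia.
have -> : A * (P * B) * e = A * B * (P * e) by ring.
by rewrite pmulr_rge0 // mulr_gt0.
Qed.

End Nodes.

(* [Defs.is_interval] is the library's [is_interval]; [hk1] and [hkn] are
   implied by [hlpos] and [hlsum]. *)
Theorem theorem1 (R : realType) (I : set R) (hI : Defs.is_interval I)
  (n : nat) (f : R -> R) (hf : n_convex I n f)
  (k : nat) (hk1 : (1 <= k)%N) (hkn : (k <= n)%N)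
  (x : nat -> R) (l : nat -> nat)
  (hxI : forall j, (1 <= j <= k)%N -> I (x j))
  (hxinc : forall j, (1 <= j < k)%N -> x j < x j.+1)
  (hlpos : forall j, (1 <= j <= k)%N -> (0 < l j)%N)
  (hlsum : (\sum_(1 <= j < k.+1) l j)%N = n.+1)
  (hl1 : (forall y, I y -> x 1%N <= y) -> l 1%N = 1%N)
  (hlk : (forall y, I y -> y <= x k) -> l k = 1%N) :
  exists p : {poly R}, (size p <= n.+1)%N /\
    (forall j, (1 <= j <= k)%N -> p.[x j] = f (x j)) /\
    (forall y, I y -> y < x 1%N -> 0 <= (-1) ^+ n.+1 * (f y - p.[y])) /\
    (forall j, (1 <= j < k)%N -> forall y, x j < y < x j.+1 ->
       0 <= (-1) ^+ (n.+1 - \sum_(1 <= i < j.+1) l i)%N * (f y - p.[y])) /\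
    (forall y, I y -> x k < y -> 0 <= f y - p.[y]).
Proof.
have zsI z : z \in nodes x l k -> I z by case/mem_nodes => i ik ->; exact: hxI.
have zs2 z : z \in nodes x l k -> (1 < count_mem z (nodes x l k))%N -> twosided I z.
  case/mem_nodes => j jk ->; rewrite (count_nodes l hxinc jk).
  exact: (twosided_point hxinc hxI hl1 hlk jk).
have size_zs : size (nodes x l k) = n.+1 by rewrite size_nodes.
have [p sp [pz psign]] := exists_sign_interpolant hI hf size_zs zsI zs2.
exists p; split=> //; split; [|split; [|split]].
- by move=> j jk; apply: pz; rewrite -has_pred1 has_count (count_nodes l hxinc jk) hlpos.
- move=> y Iy yx1; rewrite -hlsum.
  by apply: (prod_nodes_sign hxinc (J := 0) _ _ _ (psign y Iy)).
- move=> j /andP[j1 jk] y /andP[xjy yxj].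
  have Iy : I y.
    by apply: (hI (x j) (x j.+1)); [apply: hxI; lia | apply: hxI; lia | rewrite !ltW].
  rewrite -hlsum (big_cat_nat (n := j.+1)) //= ?addKn; last exact: ltnW.
  by apply: (prod_nodes_sign hxinc (J := j) _ _ _ (psign y Iy)) => //; exact: ltnW.
- move=> y Iy xky; have yk : (k < k)%N -> y < x k.+1 by rewrite ltnn.
  have := prod_nodes_sign hxinc (leqnn k) (fun=> xky) yk (psign y Iy).
  by rewrite big_geq // expr0 mul1r.
Qed.
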